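(* Let $G$ be a finite solvable group and $H$ be a subgroup of $G$. Then $d_{L(G)^*}(H)\leq |G|-1$. Moreover, $$|E(L(G)^* )|\leq\frac{1}{2}\,|V(L(G)^* )|\,(|G|-1),$$ where $V(L(G)^* )$ and $E(L(G)^* )$ denote the sets of vertices and edges of $L(G)^*$.
   Context: The subgroup graph $L(G)^*$ of a finite group $G$ is the simple undirected graph whose vertices are the subgroups of $G$, two subgroups $H_1,H_2$ being adjacent iff one is a maximal subgroup of the other (i.e. $H_1<H_2$ with no subgroup strictly between them, or vice versa). $d_{L(G)^*}(H)$ is the degree of the vertex $H$. *)

From mathcomp Require Import all_boot all_fingroup all_solvable.
Set Implicit Arguments. Unset Strict Implicit. Unset Printing Implicit Defensive.
Local Open Scope group_scope.

Definition subgroup_vertices (gT : finGroupType) (G : {group gT}) : {set {group gT}} :=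
  [set H : {group gT} | H \subset G].

Definition covers (gT : finGroupType) (K H : {group gT}) : bool :=
  (K \proper H) && [forall M : {group gT}, ~~ ((K \proper M) && (M \proper H))].

Definition sg_adj (gT : finGroupType) (H1 H2 : {group gT}) : bool :=
  covers H1 H2 || covers H2 H1.

Definition sg_degree (gT : finGroupType) (G H : {group gT}) : nat :=
  #|[set K in subgroup_vertices G | sg_adj H K]|.

Definition sg_edges (gT : finGroupType) (G : {group gT}) : {set {set {group gT}}} :=
  [set [set H1; H2] | H1 in subgroup_vertices G, H2 in subgroup_vertices G
                    & sg_adj H1 H2].

From mathcomp Require Import all_boot all_fingroup all_solvable zify.
Set Implicit Arguments. Unset Strict Implicit. Unset Printing Implicit Defensive.

(* A neighbour of [H] is either a maximal subgroup of [H] or a subgroup of [G]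
   covering [H]. There are at most [#|G| - #|H|] covers, and a solvable [H] has
   fewer than [#|H|] maximal subgroups, so [H] has degree at most [#|G| - 1];
   the edge bound is then the handshake lemma.
   The count of maximal subgroups goes by induction through a minimal normal
   subgroup [N] of [G], elementary abelian as [G] is solvable: the maximal
   subgroups containing [N] are those of [G / N], and the others complement [N]
   and number at most [#|G| - #|G : N|]. *)

Local Open Scope group_scope.

Lemma leq_card_bigcup (T I : finType) (P : {set I}) (F : I -> {set T}) :
  #|\bigcup_(i in P) F i| <= \sum_(i in P) #|F i|.
Proof.
elim/big_rec2: _ => [|i A n _ IH]; first by rewrite cards0.
by rewrite (leq_trans (leq_card_setU _ _).1) // leq_add2l.
Qed.

Lemma double_card_edges_le (T : finType) (V : {set T}) (e : rel T) :
  symmetric e -> irreflexive e ->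
  (#|[set [set x; y] | x in V, y in V & e x y]|).*2
    <= \sum_(x in V) #|[set y in V | e x y]|.
Proof.
move=> eC eI; set P := [set u : T * T | [&& u.1 \in V, u.2 \in V & e u.1 u.2]].
set P1 := [set u in P | enum_rank u.1 < enum_rank u.2].
pose sw (u : T * T) := (u.2, u.1).
have swK : involutive sw by case.
have leEP1 : #|[set [set x; y] | x in V, y in V & e x y]| <= #|P1|.
  apply: leq_trans (leq_imset_card (fun u => [set u.1; u.2]) P1).
  apply: subset_leq_card; apply/subsetP => _ /imset2P[x y Vx /setIdP[Vy exy] ->].
  case: (ltngtP (enum_rank x) (enum_rank y)) => [lt_xy | lt_yx | /val_inj/enum_rank_inj eq_xy].
  - by apply/imsetP; exists (x, y); rewrite // !inE Vx Vy exy.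
  - apply/imsetP; exists (y, x); last by rewrite /= setUC.
    by rewrite !inE Vx Vy eC exy.
  - by rewrite eq_xy eI in exy.
have tiP1 : P1 :&: sw @: P1 = set0.
  apply/setP => u; rewrite !inE; apply/negP => /andP[/andP[_ lt1] /imsetP[v]].
  by rewrite inE => /andP[_ lt2] eu; rewrite eu /= ltnNge ltnW in lt1.
have sP1P : P1 :|: sw @: P1 \subset P.
  apply/subsetP => u; rewrite inE => /orP[/setIdP[] // | /imsetP[v]].
  by rewrite !inE => /andP[/and3P[V1 V2 e12] _] ->; rewrite V1 V2 eC e12.
have leP : #|P| <= \sum_(x in V) #|[set y in V | e x y]|.
  have coverP : P \subset \bigcup_(x in V) [set (x, y) | y in [set y in V | e x y]].
    apply/subsetP => -[x y]; rewrite inE => /and3P[Vx Vy exy]; apply/bigcupP; exists x => //.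
    by apply/imsetP; exists y; rewrite // inE Vy.
  apply: leq_trans (subset_leq_card coverP) _; apply: leq_trans (leq_card_bigcup _ _) _.
  by apply: leq_sum => x _; apply: leq_imset_card.
apply: leq_trans leP; apply: leq_trans (subset_leq_card sP1P).
rewrite cardsU tiP1 cards0 subn0 card_imset; last exact: inv_inj.
by rewrite addnn leq_double.
Qed.

Lemma mulg_normal_pnat_Sylow (gT : finGroupType) r (X K S : {group gT}) :
  K <| X -> r.-Sylow(X) S -> r.-nat #|X : K| -> K * S = X.
Proof.
move=> nsKX sylS rXK; have [sSX _ r'XS] := and3P sylS.
have nKS : S \subset 'N(K) := subset_trans sSX (normal_norm nsKX).
have sJX : K <*> S \subset X by rewrite join_subG normal_sub.
have iJ1 : #|X : K <*> S| = 1%N.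
  apply: pnat_1 (pnat_dvd (indexgS _ (joing_subl K S)) rXK) _.
  exact: pnat_dvd (indexgS _ (joing_subr K S)) r'XS.
by rewrite -norm_joinEr // (index1g sJX iJ1).
Qed.

Section MinimalNormal.
Variables (gT : finGroupType) (G N : {group gT}).
Implicit Types C D K L M R X Y : {group gT}.
Hypotheses (minN : minnormal N G) (sNG : N \subset G).

Let nsNG : N <| G.
Proof. by rewrite /normal sNG; case/mingroupp/andP: minN. Qed.

Let ntN : N :!=: 1.
Proof. by case/mingroupp/andP: minN. Qed.

Lemma minnormal_normal_sub Y : Y <| G -> Y \subset N -> Y :=: 1 \/ Y :=: N.
Proof.
case/andP=> _ nYG sYN; have [-> | ntY] := eqVneq (Y : {set gT}) 1; first by left.
by right; case/mingroupP: minN => _ minN'; apply: minN'; rewrite ?ntY.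
Qed.

Definition normal_complements C := [set K : {group gT} |
  [&& K \subset C, K <| G, K :&: N == 1 & (#|K| * #|N|)%N == #|C|]].

Lemma normal_complementsP C K : K \in normal_complements C ->
  [/\ K \subset C, K <| G, K :&: N = 1 & (#|K| * #|N|)%N = #|C|].
Proof. by rewrite inE => /and4P[? ? /eqP ? /eqP ?]. Qed.

Lemma normal_complement_mul C K : N \subset C -> K \in normal_complements C -> K * N = C.
Proof.
move=> sNC /normal_complementsP[sKC _ tiKN cardK]; apply/eqP.
by rewrite eqEcard mul_subG //= (TI_cardMg tiKN) cardK.
Qed.

Lemma normal_complement_between C K Y : N \subset C -> K \in normal_complements C ->
  Y <| G -> K \subset Y -> Y \subset C -> Y :=: K \/ Y :=: C.
Proof.
move=> sNC kK nsYG sKY sYC; have defC := normal_complement_mul sNC kK.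
have defY : K * (N :&: Y) = Y by rewrite group_modl // defC; apply/setIidPr.
have [tiNY | sNY] := minnormal_normal_sub (normalI nsNG nsYG) (subsetIl _ _).
  by left; rewrite -defY /= tiNY mulg1.
by right; rewrite -defY /= sNY defC.
Qed.

Lemma normal_complements_mul C K1 K2 : N \subset C ->
  K1 \in normal_complements C -> K2 \in normal_complements C -> K1 != K2 -> K1 * K2 = C.
Proof.
move=> sNC kK1 kK2 neK; have [sK1C nsK1G _ cardK1] := normal_complementsP kK1.
have [sK2C nsK2G _ cardK2] := normal_complementsP kK2.
have nK12 : K2 \subset 'N(K1) := subset_trans (normal_sub nsK2G) (normal_norm nsK1G).
have nsJG : (K1 <*> K2)%G <| G by rewrite /= norm_joinEr // normalM.
have sJC : K1 <*> K2 \subset C by rewrite join_subG sK1C.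
have [eJK1 | ] := normal_complement_between sNC kK1 nsJG (joing_subl _ _) sJC.
  have sK21 : K2 \subset K1 by rewrite -eJK1 joing_subr.
  case/eqP: neK; apply/group_inj/eqP; rewrite eq_sym eqEcard sK21 /=.
  by rewrite -(leq_pmul2r (cardG_gt0 N)) cardK1 cardK2.
by rewrite /= norm_joinEr.
Qed.

Lemma card_normal_complementsI C K1 K2 : N \subset C ->
    K1 \in normal_complements C -> K2 \in normal_complements C -> K1 != K2 ->
  (#|K1 :&: K2| * #|N|)%N = #|K1|.
Proof.
move=> sNC kK1 kK2 neK; have [_ _ _ cardK2] := normal_complementsP kK2.
have := mul_cardG K1 K2; rewrite (normal_complements_mul sNC kK1 kK2 neK) -cardK2 => eq12.
apply/eqP; rewrite -(eqn_pmul2l (cardG_gt0 K2)) (mulnC #|K2| #|K1|) eq12.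
by rewrite -mulnA (mulnC #|N|).
Qed.

Lemma normal_complementsI C D K : N \subset D -> D <| G -> D \subset C ->
  K \in normal_complements C -> (K :&: D)%G \in normal_complements D.
Proof.
move=> sND nsDG sDC kK; have [sKC nsKG tiKN cardK] := normal_complementsP kK.
have sNC := subset_trans sND sDC.
rewrite inE /= subsetIr normalI //= setIAC tiKN (setIidPl (sub1G _)) eqxx /=.
have nKD : D \subset 'N(K) := subset_trans (normal_sub nsDG) (normal_norm nsKG).
have nsJG : (K <*> D)%G <| G by rewrite /= norm_joinEr // normalM.
have sJC : K <*> D \subset C by rewrite join_subG sKC.
have [eJK | ] := normal_complement_between sNC kK nsJG (joing_subl _ _) sJC.
  case/eqP: ntN; apply/trivgP; rewrite -tiKN subsetI subxx andbT -eJK.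
  exact: subset_trans sND (joing_subr _ _).
rewrite /= norm_joinEr // => defC; have := mul_cardG K D; rewrite defC -cardK => eqKD.
by rewrite -(eqn_pmul2l (cardG_gt0 K)) eqKD -mulnA (mulnC #|N|).
Qed.

(* The fibre of [K |-> K :&: D] over [L] embeds in the coset [c *: N]: two
   distinct complements in the fibre meet exactly in [L], which avoids [c *: N]. *)
Lemma card_normal_complements_fibre C D L c : N \subset D -> D \subset C ->
    (#|D| * #|N|)%N = #|C| -> c \in C -> c \notin D -> L \in normal_complements D ->
  #|[set K in normal_complements C | K :&: D == L :> {set gT}]| <= #|N|.
Proof.
move=> sND sDC cardD Cc Dc' kL; have [sLD _ _ cardL] := normal_complementsP kL.
have sNC := subset_trans sND sDC.
pose f K := odflt 1 [pick y in K :&: c *: N].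
have fP K : K \in normal_complements C -> f K \in K :&: c *: N.
  move=> kK; rewrite /f; case: pickP => //= noy.
  have : c \in K * N by rewrite (normal_complement_mul sNC kK).
  case/mulsgP=> k n Kk Nn def_c; have := noy k.
  by rewrite inE Kk mem_lcoset def_c invMg -mulgA mulVg mulg1 groupV Nn.
have fD' K : K \in normal_complements C -> f K \notin D.
  move=> /fP /setIP[_]; rewrite mem_lcoset => cNf; apply: contra Dc' => Dy.
  have -> : c = f K * (c^-1 * f K)^-1 by rewrite invMg invgK mulgA mulgV mul1g.
  by rewrite groupM ?groupV // (subsetP sND).
have f_inj : {in [set K in normal_complements C | K :&: D == L :> {set gT}] &, injective f}.
  move=> K1 K2 /setIdP[kK1 /eqP K1D] /setIdP[kK2 /eqP K2D] eqf.
  apply/eqP/negPn/negP => neK; case/negP: (fD' K1 kK1).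
  have sLK12 : L \subset K1 :&: K2.
    by rewrite subsetI; apply/andP; split; [rewrite -K1D | rewrite -K2D]; apply: subsetIl.
  have cardK12 : #|K1 :&: K2| = #|L|.
    apply/eqP; rewrite -(eqn_pmul2r (cardG_gt0 N)) (card_normal_complementsI sNC kK1 kK2 neK).
    have [_ _ _ cardK1] := normal_complementsP kK1.
    by rewrite cardL -(eqn_pmul2r (cardG_gt0 N)) cardK1 cardD.
  have eqL : K1 :&: K2 = L by apply/eqP; rewrite eq_sym eqEcard sLK12 cardK12 leqnn.
  have /setIP[K1f _] := fP K1 kK1; have /setIP[K2f _] := fP K2 kK2.
  by rewrite (subsetP sLD) // -eqL inE K1f eqf K2f.
rewrite -(card_in_imset f_inj) -(card_lcoset N c); apply: subset_leq_card.
by apply/subsetP => _ /imsetP[K /setIdP[/fP /setIP[_ cNf] _] ->].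
Qed.

(* Two distinct normal complements [K0], [K1] give a smaller normal subgroup
   [D := N (K0 :&: K1)] of index [#|N|] in [C]; restricting complements to [D]
   has fibres of size at most [#|N|], so induction on [#|C|] applies. *)
Lemma card_normal_complements C : C <| G -> N \subset C ->
  #|normal_complements C| <= #|C : N|.
Proof.
have [n] := ubnP #|C|; elim: n C => // n IHn C /ltnSE-leCn nsCG sNC.
have [le1 | ] := leqP #|normal_complements C| 1.
  by apply: leq_trans le1 _; rewrite indexg_gt0.
case/card_gt1P=> K0 [K1 [kK0 kK1 neK]].
have [sK0C nsK0G tiK0N cardK0] := normal_complementsP kK0.
have [_ nsK1G _ _] := normal_complementsP kK1.
set L := (K0 :&: K1)%G; have cardL := card_normal_complementsI sNC kK0 kK1 neK.
have nsLG : L <| G by apply: normalI.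
have nNL : L \subset 'N(N) := subset_trans (normal_sub nsLG) (normal_norm nsNG).
set D := (N <*> L)%G; have defD : D :=: N * L by rewrite /= norm_joinEr.
have tiNL : N :&: L = 1.
  by apply/trivgP; rewrite -tiK0N setIC; apply/setIS/subsetIl.
have cardD : #|D| = #|K0| by rewrite defD (TI_cardMg tiNL) mulnC cardL.
have nsDG : D <| G by rewrite defD normalM.
have sND : N \subset D by rewrite defD mulG_subl.
have sDC : D \subset C by rewrite defD mul_subG // subIset ?sK0C.
have cardDN : (#|D| * #|N|)%N = #|C| by rewrite cardD.
have [c K0c Dc'] : exists2 c, c \in K0 & c \notin D.
  apply/subsetPn/negP => sK0D; case/eqP: ntN; apply/trivgP.
  have eK0D : K0 :=: D by apply/eqP; rewrite eqEcard sK0D cardD leqnn.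
  by rewrite -tiK0N subsetI subxx andbT eK0D.
have cover : normal_complements C \subset \bigcup_(L' in normal_complements D)
    [set K in normal_complements C | K :&: D == L' :> {set gT}].
  apply/subsetP => K kK; apply/bigcupP; exists (K :&: D)%G.
    exact: normal_complementsI sND nsDG sDC kK.
  by rewrite inE kK /=.
apply: leq_trans (subset_leq_card cover) _; apply: leq_trans (leq_card_bigcup _ _) _.
apply: leq_trans (_ : _ <= \sum_(L' in normal_complements D) #|N|) _.
  apply: leq_sum => L' kL'.
  exact: card_normal_complements_fibre sND sDC cardDN (subsetP sK0C c K0c) Dc' kL'.
have ltDC : #|D| < #|C| by rewrite -cardDN ltn_Pmulr // cardG_gt1.
have indexC : #|C : N| = #|D|.
  by apply/eqP; rewrite -(eqn_pmul2l (cardG_gt0 N)) Lagrange // mulnC cardDN.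
rewrite sum_nat_const indexC -(Lagrange sND) mulnC leq_mul2l.
by rewrite IHn ?orbT // (leq_trans ltDC).
Qed.

Lemma maximal_minnormal_compl M : abelian N -> maximal M G -> ~~ (N \subset M) ->
  M :&: N = 1 /\ N * M = G.
Proof.
move=> abN maxM sN'M; have [ltMG maxM'] := maxgroupP maxM; have sMG := proper_sub ltMG.
have nNM : M \subset 'N(N) := subset_trans sMG (normal_norm nsNG).
have defG : N * M = G.
  apply/eqP; rewrite eqEsubset mul_subG //=; apply/negPn/negP => sG'NM.
  have ltJG : (N <*> M)%G \proper G by rewrite properE /= join_subG sNG sMG norm_joinEr.
  by case/negP: sN'M; rewrite -(maxM' _ ltJG (joing_subr _ _)) joing_subl.
split=> //; have nsMN_G : (M :&: N)%G <| G.
  rewrite /normal /= (subset_trans (subsetIl _ _) sMG) -defG mul_subG //.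
    by rewrite cents_norm // centsC (subset_trans (subsetIr _ _)).
  by rewrite normsI ?normG.
have [// | eqMN] := minnormal_normal_sub nsMN_G (subsetIr _ _).
by case/negP: sN'M; rewrite -eqMN subsetIl.
Qed.

Lemma maximal_minnormal_complI M X : abelian N -> maximal M G -> ~~ (N \subset M) ->
    N \subset X -> X \subset G ->
  [/\ N :&: (M :&: X) = 1, N * (M :&: X) = X & (#|M :&: X| * #|N|)%N = #|X|].
Proof.
move=> abN maxM sN'M sNX sXG; have [tiMN defG] := maximal_minnormal_compl abN maxM sN'M.
have tiNMX : N :&: (M :&: X) = 1.
  by apply/trivgP; rewrite -tiMN subsetI subsetIl andbT (subset_trans (subsetIr _ _)) ?subsetIl.
have defX : N * (M :&: X) = X by rewrite group_modl // defG; apply/setIidPr.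
by rewrite mulnC -(TI_cardMg tiNMX) defX.
Qed.

Lemma maximal_meet_cent_compl M : abelian N -> maximal M G -> ~~ (N \subset M) ->
  (M :&: 'C_G(N))%G \in normal_complements 'C_G(N).
Proof.
move=> abN maxM sN'M; have sMG := proper_sub (maxgroupp maxM).
have [tiMN defG] := maximal_minnormal_compl abN maxM sN'M.
have sNC : N \subset 'C_G(N) by rewrite subsetI sNG.
have [_ _ cardMC] := maximal_minnormal_complI abN maxM sN'M sNC (subsetIl _ _).
rewrite inE /= subsetIr setIAC tiMN (setIidPl (sub1G _)) cardMC !eqxx !andbT.
have nCG : G \subset 'N('C_G(N)) by rewrite normsI ?normG ?norms_cent ?normal_norm.
have nMC_G : G \subset 'N(M :&: 'C_G(N)).
  rewrite -{1}defG mul_subG //.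
    by rewrite cents_norm // centsC (subset_trans (subsetIr _ _)) ?subsetIr.
  by rewrite normsI ?normG ?(subset_trans sMG nCG).
by rewrite /normal nMC_G andbT (subset_trans (subsetIr _ _)) ?subsetIl.
Qed.

Lemma maximal_norm_meet M R : abelian N -> maximal M G -> ~~ (N \subset M) ->
  R <| G -> N \subset R -> ~~ (R \subset 'C(N)) -> 'N_G(M :&: R) = M.
Proof.
move=> abN maxM sN'M nsRG sNR sR'CN; have [ltMG maxM'] := maxgroupP maxM.
have sMG := proper_sub ltMG.
have sMNMR : M \subset 'N_G(M :&: R).
  by rewrite subsetI sMG normsI ?normG // (subset_trans sMG) ?normal_norm.
have [ltNG | ] := boolP ('N_G(M :&: R) \proper G); first exact: maxM' ltNG sMNMR.
rewrite properE subsetIl /= negbK => nMR_G; case/negP: sR'CN.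
have [tiNMR defR _] := maximal_minnormal_complI abN maxM sN'M sNR (normal_sub nsRG).
have cNMR : M :&: R \subset 'C(N).
  apply/commG1P/trivgP; rewrite -tiNMR subsetI commg_subl commg_subr.
  rewrite (subset_trans sNG) ?(subset_trans nMR_G (subsetIr _ _)) //.
  by rewrite (subset_trans (subsetIr _ _)) // (subset_trans (normal_sub nsRG)) ?normal_norm.
by rewrite -defR mul_subG // centsC.
Qed.

(* [N] meets the centre of the [p]-group [N P] ([P] a Sylow [p]-subgroup of
   [R = 'C_G(N) P]) nontrivially, so [R] centralizes a nontrivial normal
   subgroup of [G] inside [N], hence all of [N]. *)
Lemma minnormal_pnat_cents (p : nat) R : p.-group N -> R <| G -> 'C_G(N) \subset R ->
  p.-nat #|R : 'C_G(N)| -> R \subset 'C(N).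
Proof.
move=> pN nsRG sCR pRC; have sRG := normal_sub nsRG; have nNG := normal_norm nsNG.
have nsCR : 'C_G(N) <| R.
  by rewrite /normal sCR (subset_trans sRG) // normsI ?normG ?norms_cent.
have [P sylP] := Sylow_exists p R; have [sPR pP _] := and3P sylP.
have defR := mulg_normal_pnat_Sylow nsCR sylP pRC.
have nNP : P \subset 'N(N) := subset_trans (subset_trans sPR sRG) nNG.
have pNP : p.-group (N <*> P) by rewrite norm_joinEr // pgroupM pN.
have nsN_NP : N <| N <*> P.
  by apply: normalS (joing_subl _ _) _ nsNG; rewrite join_subG sNG (subset_trans sPR).
have ntNZ := meet_center_nil (pgroup_nil pNP) nsN_NP ntN.
have nsCNR_G : 'C_N(R)%G <| G.
  by rewrite /normal /= (subset_trans (subsetIl _ _) sNG) normsI ?norms_cent ?normal_norm.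
have [tiCNR | eqCNR] := minnormal_normal_sub nsCNR_G (subsetIl _ _); last first.
  by rewrite centsC -eqCNR subsetIr.
case/negP: ntNZ; rewrite -subG1 -tiCNR /= subsetI subsetIl -defR centM subsetI.
have cNC : N \subset 'C('C_G(N)) by rewrite centsC subsetIr.
rewrite (subset_trans (subsetIl _ _) cNC) /= (subset_trans (subsetIr _ _)) //.
exact: subset_trans (subsetIr _ _) (centS (joing_subr N P)).
Qed.

Lemma exists_chief_factor_over_cent (p : nat) : solvable G -> p.-abelem N ->
    ~~ (G \subset 'C(N)) ->
  exists r : nat, exists2 R : {group gT},
    [/\ R <| G, 'C_G(N) \proper R & r.-nat #|R : 'C_G(N)|] & r^'.-nat #|N|.
Proof.
move=> solG abN sG'CN; have nNG := normal_norm nsNG.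
have nsCG : 'C_G(N) <| G by have := subcent_normal G N; rewrite (setIidPl nNG).
have ntQ : G / 'C_G(N) != 1.
  by apply: contra sG'CN; rewrite -subG1 quotient_sub1 ?normal_norm // subsetI subxx.
have [Rq minRq sRqQ] := minnormal_exists ntQ (normG _).
have [nRq ntRq /is_abelemP[r _ /abelem_pgroup rRq]] :=
  minnormal_solvable minRq sRqQ (quotient_sol _ solG).
set C := 'C_G(N)%G in nsCG sRqQ nRq rRq *; set R := (coset C @*^-1 Rq)%G.
have nsRG : R <| G by rewrite -(quotientGK nsCG) cosetpre_normal /normal sRqQ.
have sCR : C \subset R by apply: sub_cosetpre.
have indexRC : #|R : C| = #|Rq|.
  by rewrite -card_quotient ?(subset_trans (normal_sub nsRG)) ?normal_norm ?cosetpreK.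
have ltCR : C \proper R by rewrite properE sCR -indexg_gt1 indexRC cardG_gt1.
have rRC : r.-nat #|R : C| by rewrite indexRC.
exists r; exists R => //; apply: (pi_p'nat (abelem_pgroup abN)); rewrite !inE.
apply/eqP=> eq_pr; case/andP: ltCR => _ /negP[]; rewrite subsetI (normal_sub nsRG).
by rewrite (minnormal_pnat_cents (abelem_pgroup abN) nsRG sCR) // -eq_pr.
Qed.

Lemma maximal_meet_Sylow (r : nat) R K M : abelian N -> K \in normal_complements 'C_G(N) ->
    R <| G -> 'C_G(N) \subset R -> r.-nat #|R : 'C_G(N)| -> r^'.-nat #|N| ->
    maximal M G -> ~~ (N \subset M) -> K \subset M ->
  exists2 S : {group gT}, r.-Sylow(R) S & M :&: R = K * S.
Proof.
move=> abN kK nsRG sCR rRC r'N maxM sN'M sKM; have sRG := normal_sub nsRG.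
have [sKC nsKG _ cardK] := normal_complementsP kK.
have sNR : N \subset R by apply: subset_trans sCR; rewrite subsetI sNG.
have [_ _ cardMR] := maximal_minnormal_complI abN maxM sN'M sNR sRG.
set X := (M :&: R)%G; have sXR : X \subset R := subsetIr _ _.
have sKX : K \subset X by rewrite subsetI sKM (subset_trans sKC sCR).
have nsKX : K <| X := normalS sKX (subset_trans sXR sRG) nsKG.
have indexXK : #|X : K| = #|R : 'C_G(N)|.
  apply/eqP; rewrite -(eqn_pmul2l (cardG_gt0 K)) -(eqn_pmul2r (cardG_gt0 N)).
  by rewrite Lagrange // cardMR mulnAC cardK Lagrange.
have indexRX : #|R : X| = #|N|.
  by apply/eqP; rewrite -(eqn_pmul2l (cardG_gt0 X)) Lagrange // cardMR.
have [S sylS] := Sylow_exists r X; have [sSX rS r'XS] := and3P sylS.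
exists S; last by rewrite (mulg_normal_pnat_Sylow nsKX sylS) // indexXK.
by rewrite /pHall (subset_trans sSX sXR) rS -(Lagrange_index sXR sSX) pnatM indexRX r'N.
Qed.

(* All maximal subgroups [M] in the set are conjugate under [N]: the groups
   [M :&: R] are conjugate under [R = N (M :&: R)] by Sylow's theorem, and [M]
   is recovered as the normalizer of [M :&: R]. *)
Lemma card_maximal_fibre (p : nat) K : solvable G -> p.-abelem N ->
    ~~ (G \subset 'C(N)) -> K \in normal_complements 'C_G(N) ->
  #|[set M : {group gT} | [&& maximal M G, ~~ (N \subset M) & K \subset M]]| <= #|N|.
Proof.
move=> solG abN sG'CN kK; have abN' := abelem_abelian abN.
have [_ nsKG _ _] := normal_complementsP kK; have nNG := normal_norm nsNG.
have [r [R [nsRG ltCR rRC] r'N]] := exists_chief_factor_over_cent solG abN sG'CN.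
have sCR := proper_sub ltCR; have sRG := normal_sub nsRG.
have sNR : N \subset R by apply: subset_trans sCR; rewrite subsetI sNG.
have sR'CN : ~~ (R \subset 'C(N)).
  by case/andP: ltCR => _; apply: contra => cRN; rewrite subsetI sRG.
set S := [set M : {group gT} | _].
have meetS M : M \in S -> [/\ exists2 T : {group gT}, r.-Sylow(R) T & M :&: R = K * T,
                             N * (M :&: R) = R & 'N_G(M :&: R) = M].
  rewrite inE => /and3P[maxM sN'M sKM]; split.
  - exact: maximal_meet_Sylow abN' kK nsRG sCR rRC r'N maxM sN'M sKM.
  - by have [] := maximal_minnormal_complI abN' maxM sN'M sNR sRG.
  - exact: maximal_norm_meet abN' maxM sN'M nsRG sNR sR'CN.
have [-> | [M0 SM0]] := set_0Vmem S; first by rewrite cards0.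
have [[T0 sylT0 defM0R] defR nM0R] := meetS M0 SM0.
apply: leq_trans (leq_imset_card (fun n => (M0 :^ n)%G) N); apply: subset_leq_card.
apply/subsetP => M SM; have [[T sylT defMR] _ nMR] := meetS M SM.
have [y Ry defT] := Sylow_trans sylT0 sylT.
have nKy : y \in 'N(K) := subsetP (subset_trans sRG (normal_norm nsKG)) y Ry.
have MRy : M :&: R = (M0 :&: R) :^ y by rewrite defMR defT defM0R conjsMg (normP nKy).
have nNM0R : M0 :&: R \subset 'N(N) := subset_trans (subsetIr _ _) (subset_trans sRG nNG).
have : y \in (M0 :&: R) * N by rewrite (normC nNM0R) defR.
case/mulsgP=> x n M0Rx Nn def_y.
have MRn : M :&: R = (M0 :&: R) :^ n by rewrite MRy def_y conjsgM (conjGid M0Rx).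
apply/imsetP; exists n => //; apply: group_inj => /=.
by rewrite -nMR MRn normJ -[in RHS]nM0R conjIg (conjGid (subsetP sNG n Nn)).
Qed.

(* [M |-> M :&: 'C_G(N)] maps these [M] to normal complements of [N] in
   ['C_G(N)], with fibres of size at most [#|N|] when ['C_G(N) < G]; so there
   are at most [#|'C_G(N)| <= #|G| / 2] of them, or [#|G : N|] if [N] is central. *)
Lemma card_maximal_not_over_minnormal (p : nat) : solvable G -> p.-abelem N ->
  (#|[set M : {group gT} | maximal M G && ~~ (N \subset M)]| + #|G : N|)%N <= #|G|.
Proof.
move=> solG abN; have abN' := abelem_abelian abN; have nNG := normal_norm nsNG.
set B := [set M : {group gT} | _].
have nsCG : 'C_G(N) <| G by have := subcent_normal G N; rewrite (setIidPl nNG).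
have sNC : N \subset 'C_G(N) by rewrite subsetI sNG.
have leKC := card_normal_complements nsCG sNC.
have kM M : M \in B -> (M :&: 'C_G(N))%G \in normal_complements 'C_G(N).
  by rewrite inE => /andP[maxM sN'M]; apply: maximal_meet_cent_compl.
have halfG (H : {group gT}) : H \proper G -> (#|H| * 2 <= #|G|)%N.
  move=> ltHG; rewrite -(Lagrange (proper_sub ltHG)) leq_mul2l indexg_gt1.
  by case/andP: ltHG => _ ->; rewrite orbT.
have halfGN : (#|G : N| * 2 <= #|G|)%N.
  by rewrite -(Lagrange sNG) mulnC leq_mul2r cardG_gt1 ntN orbT.
have [cGN | sG'CN] := boolP (G \subset 'C(N)).
  have eqCG : 'C_G(N)%G = G by apply/group_inj/setIidPl.
  have sBK : B \subset normal_complements 'C_G(N).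
    apply/subsetP => M BM; have sMG : M \subset G.
      by move: BM; rewrite inE => /andP[/maxgroupp/proper_sub].
    have eqM : (M :&: 'C_G(N))%G = M by apply/group_inj/setIidPl; rewrite eqCG.
    by rewrite -eqM; apply: kM.
  have := leq_trans (subset_leq_card sBK) leKC; rewrite eqCG => leBGN.
  by apply: leq_trans (leq_add leBGN (leqnn _)) _; rewrite addnn -muln2.
have cover : B \subset \bigcup_(K in normal_complements 'C_G(N))
    [set M : {group gT} | [&& maximal M G, ~~ (N \subset M) & K \subset M]].
  apply/subsetP => M BM; apply/bigcupP; exists (M :&: 'C_G(N))%G; first exact: kM.
  by move: BM; rewrite !inE => /andP[-> ->]; rewrite subsetIl.
have leBC : #|B| <= #|'C_G(N)|.
  apply: leq_trans (subset_leq_card cover) _; apply: leq_trans (leq_card_bigcup _ _) _.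
  apply: leq_trans (_ : _ <= \sum_(K in normal_complements 'C_G(N)) #|N|) _.
    by apply: leq_sum => K kK; apply: card_maximal_fibre solG abN sG'CN kK.
  by rewrite sum_nat_const -(Lagrange sNC) mulnC leq_mul2l leKC orbT.
have ltCG : 'C_G(N) \proper G by rewrite properE subsetIl subsetI subxx.
rewrite -leq_double -!muln2 mulnDl.
apply: leq_trans (leq_add (leq_mul leBC (leqnn 2)) halfGN) _.
by rewrite [X in _ <= X]muln2 -addnn leq_add2r halfG.
Qed.

End MinimalNormal.

Lemma card_maximal_over_normal (gT : finGroupType) (G N : {group gT}) : N <| G ->
  #|[set M : {group gT} | maximal M G && (N \subset M)]|
    <= #|[set Q : {group coset_of N} | maximal Q (G / N)]|.
Proof.
move=> nsNG; set A := [set M : {group gT} | _].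
have nsNA M : M \in A -> N <| M.
  by rewrite inE => /andP[/maxgroupp/proper_sub sMG sNM]; apply: normalS nsNG.
have quo_inj : {in A &, injective (fun M : {group gT} => (M / N)%G)}.
  move=> M1 M2 /nsNA nsN1 /nsNA nsN2 /(congr1 val) /= eqMN.
  exact/group_inj/(quotient_inj nsN1 nsN2 eqMN).
rewrite -(card_in_imset quo_inj); apply/subset_leq_card/subsetP => _ /imsetP[M AM ->].
by rewrite inE (quotient_maximal (nsNA M AM) nsNG); case/setIdP: AM.
Qed.

Lemma card_maximal_solvable (gT : finGroupType) (G : {group gT}) : solvable G ->
  #|[set M : {group gT} | maximal M G]| < #|G|.
Proof.
move: gT G; suff IH n gT (G : {group gT}) : #|G| <= n -> solvable G ->
    #|[set M : {group gT} | maximal M G]| < #|G| by move=> gT G; apply: IH.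
elim: n gT G => [|n IHn] gT G leGn solG; first by rewrite leqNgt cardG_gt0 in leGn.
have [G1 | ntG] := eqVneq (G : {set gT}) 1.
  rewrite (_ : [set M : {group gT} | _] = set0) ?cards0 //; apply/setP => M.
  by rewrite !inE; apply/negbTE/negP => /maxgroupp; rewrite G1 properE sub1G andbF.
have [N minN sNG] := minnormal_exists ntG (normG G).
have [nNG ntN /is_abelemP[p _ abN]] := minnormal_solvable minN sNG solG.
have nsNG : N <| G by rewrite /normal sNG.
have leAGN : #|[set M : {group gT} | maximal M G && (N \subset M)]| < #|G : N|.
  have ltQG : #|G / N| < #|G| := ltn_quotient ntN sNG.
  rewrite -card_quotient //; apply: leq_ltn_trans (card_maximal_over_normal nsNG) _.
  by apply: IHn (quotient_sol N solG); rewrite -ltnS (leq_trans ltQG).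
have splitN : [set M : {group gT} | maximal M G] \subset
    [set M : {group gT} | maximal M G && (N \subset M)] :|:
    [set M : {group gT} | maximal M G && ~~ (N \subset M)].
  by apply/subsetP => M; rewrite !inE; case: (maximal M G); case: (N \subset M).
apply: leq_ltn_trans (subset_leq_card splitN) _; apply: leq_ltn_trans (leq_card_setU _ _).1 _.
apply: leq_trans (card_maximal_not_over_minnormal minN sNG solG abN).
by rewrite addnC ltn_add2l.
Qed.

Local Close Scope group_scope.

Section SubgroupGraph.
Variable gT : finGroupType.
Implicit Types G H K : {group gT}.

Lemma coversE K H : covers K H = maximal K H.
Proof.
apply/andP/maxgroupP=> [[ltKH /forallP noM] | [ltKH maxK]].
  split=> // M ltMH sKM; have := noM M; rewrite ltMH andbT properE sKM /= negbK.
  by move=> sMK; apply/eqP; rewrite eqEsubset sMK sKM.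
split=> //; apply/forallP => M; apply/negP => /andP[ltKM ltMH].
by have eqMK := maxK M ltMH (proper_sub ltKM); rewrite eqMK properxx in ltKM.
Qed.

(* Each [K] covering [H] is determined by any of its elements outside [H]:
   if [x \in K1 :\: H] lies in [K2] then [H < K1 :&: K2 <= K1], so [K1 <= K2]. *)
Lemma card_covers_le G H : H \subset G ->
  #|[set K : {group gT} | (K \subset G) && covers H K]| <= #|G| - #|H|.
Proof.
move=> sHG; set U := [set K : {group gT} | _]; pose f K := odflt 1%g [pick x in K :\: H].
have fP K : K \in U -> f K \in K :\: H.
  rewrite inE => /andP[_ /andP[/properP[_ [x Kx H'x] _]]].
  by rewrite /f; case: pickP => //= /(_ x); rewrite inE Kx H'x.
have sub_of_f K1 K2 : K1 \in U -> K2 \in U -> f K1 \in K2 -> K1 \subset K2.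
  move=> UK1 UK2 K2f; have /setDP[K1f H'f] := fP K1 UK1.
  move: UK1 UK2; rewrite !inE => /andP[_ /andP[ltHK1 /forallP/(_ (K1 :&: K2)%G) noM]].
  case/andP=> _ /andP[ltHK2 _].
  have ltHK12 : H \proper K1 :&: K2.
    apply/properP; split; first by rewrite subsetI !proper_sub.
    by exists (f K1); rewrite ?inE ?K1f.
  move: noM; rewrite ltHK12 /= properE subsetIl /= negbK => sK1K12.
  exact: subset_trans sK1K12 (subsetIr _ _).
have f_inj : {in U &, injective f}.
  move=> K1 K2 UK1 UK2 eqf; apply/group_inj/eqP; rewrite eqEsubset.
  have K2f1 : f K1 \in K2 by rewrite eqf; case/setDP: (fP K2 UK2).
  have K1f2 : f K2 \in K1 by rewrite -eqf; case/setDP: (fP K1 UK1).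
  by rewrite (sub_of_f K1 K2) // (sub_of_f K2 K1).
rewrite -(card_in_imset f_inj) -(setIidPr sHG) -cardsD; apply/subset_leq_card/subsetP.
move=> _ /imsetP[K UK ->]; have /setDP[Kf H'f] := fP K UK.
by move: UK; rewrite !inE H'f => /andP[sKG _]; rewrite (subsetP sKG).
Qed.

Lemma sg_degree_le G H : solvable G -> H \subset G -> sg_degree G H <= #|G| - 1.
Proof.
move=> solG sHG; rewrite /sg_degree.
have sNbr : [set K in subgroup_vertices G | sg_adj H K] \subset
    [set K : {group gT} | maximal K H] :|: [set K : {group gT} | (K \subset G) && covers H K].
  apply/subsetP => K; rewrite !inE /sg_adj => /andP[sKG /orP[coverK | coverH]].
    by rewrite sKG coverK orbT.
  by rewrite -coversE coverH.
apply: leq_trans (subset_leq_card sNbr) _; apply: leq_trans (leq_card_setU _ _).1 _.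
have ltMH : #|[set K : {group gT} | maximal K H]| < #|H| :=
  card_maximal_solvable (solvableS sHG solG).
apply: leq_trans (leq_add (_ : _ <= #|H|.-1) (card_covers_le sHG)) _.
  by rewrite -ltnS (ltn_predK ltMH).
have leHG : #|H| <= #|G| := subset_leq_card sHG; lia.
Qed.

End SubgroupGraph.

Theorem corollary2p2 (gT : finGroupType) (G H : {group gT}) :
  solvable G -> H \subset G ->
  sg_degree G H <= #|G| - 1 /\
  (#|sg_edges G|).*2 <= #|subgroup_vertices G| * (#|G| - 1).
Proof.
move=> solG sHG; split; first exact: sg_degree_le.
apply: leq_trans (double_card_edges_le _ _ _) _.
- by move=> H1 H2; rewrite /sg_adj orbC.
- by move=> H1; rewrite /sg_adj /covers properxx.
rewrite -sum_nat_const; apply: leq_sum => K; rewrite inE => sKG.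
exact: sg_degree_le.
Qed.
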